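(* Let $F$ be a sensori-computational device and $N\subseteq Y(F)$, and suppose every nonempty string $s_1s_2\cdots s_k\in\mathcal{L}(F)$ has $s_1\in Y(F)\setminus N$. If there exists a sensori-computational device that output simulates $F$ modulo the $N$-pump $P_N$ (with $L=\mathcal{L}(F)$, $\Sigma=Y(F)$), then there exists a sensori-computational device that output simulates $F$ modulo the $N$-shrink $\pi_N$ (with $L=\mathcal{L}(F)$, $\Sigma=Y(F)$).
   Context: A sensori-computational device is a 6-tuple $F=(V,V_0,Y,\tau,C,c)$ where $V$ is a non-empty finite set of states, $V_0\subseteq V$ a non-empty set of initial states, $Y=Y(F)$ a finite set of observations, $\tau:V\times V\to\mathcal{P}(Y)$, $C$ a set of outputs, $c:V\to\mathcal{P}(C)\setminus\{\emptyset\}$. A string $y_1\cdots y_n$ reaches $w$ from $v$ if there are states $w_0=v,\dots,w_n=w$ with $y_i\in\tau(w_{i-1},w_i)$; $\mathcal{R}_F(s)$ is the set of states reached by $s$ from some initial state; $\mathcal{L}(F)=\{s\in Y^*:\mathcal{R}_F(s)\ne\emptyset\}$; $\mathcal{C}_F(s)=\bigcup_{v\in\mathcal{R}_F(s)}c(v)$. For a relation $R\subseteq A\times B$ between sets of strings, $F'$ output simulates $F$ modulo $R$ if for every $s\in\mathcal{L}(F)$: (1) some $t\in\mathcal{L}(F')$ has $s\,R\,t$; (2) every $t\in B$ with $s\,R\,t$ satisfies $t\in\mathcal{L}(F')$ and $\mathcal{C}_F(s)\supseteq\mathcal{C}_{F'}(t)$. For a set $\Sigma$, $L\subseteq\Sigma^*$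 and $N\subseteq\Sigma$: the $N$-shrink is the function $\pi_N:L\to(\Sigma\setminus N)^*$ deleting every occurrence of symbols of $N$ from a string (so $\pi_N(\epsilon)=\epsilon$). The $N$-pump is the relation $P_N\subseteq L\times\Sigma^*$ defined as the smallest relation such that $\epsilon\,P_N\,\epsilon$, $s\,P_N\,s$ for every $s\in L$, and whenever $s\,P_N\,t_1\cdots t_\ell$, then $s\,P_N\,t_1\cdots t_k\,b\,t_{k+1}\cdots t_\ell$ for every $b\in N$ and $k\in\{1,\dots,\ell\}$. *)

From mathcomp Require Import all_boot.
Set Implicit Arguments. Unset Strict Implicit. Unset Printing Implicit Defensive.

(* Observations live in an ambient eqType Y; a device's observation set
   Y(F) is the finite set [dobs F] (a seq used as a finite set). *)
Record device (Y : eqType) (C : Type) := Device {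
  dst : finType;
  dinit : {set dst};
  dobs : seq Y;
  dtau : dst -> dst -> pred Y;
  dout : dst -> C -> Prop;
  dinit_nonempty : dinit != set0;
  dtau_obs : forall v w y, dtau v w y -> y \in dobs;
  dout_nonempty : forall v, exists o, dout v o
}.

Section Dev.
Variables (Y : eqType) (C : Type).
Implicit Types (F : device Y C).

Fixpoint reaches F (v : dst F) (s : seq Y) (w : dst F) : bool :=
  match s with
  | [::] => w == v
  | y :: s' => [exists u, dtau v u y && reaches u s' w]
  end.

Definition reached F (s : seq Y) : {set dst F} :=
  [set w | [exists v in dinit F, reaches v s w]].

Definition inL F (s : seq Y) : Prop := reached F s != set0.

Definition outs F (s : seq Y) (o : C) : Prop :=
  exists2 v, v \in reached F s & dout v o.

(* F' output simulates F modulo R subset A x B, where B is given as a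
   predicate on strings. *)
Definition output_simulates F F' (B : seq Y -> Prop)
    (R : seq Y -> seq Y -> Prop) : Prop :=
  forall s, inL F s ->
    (exists t, inL F' t /\ R s t) /\
    (forall t, B t -> R s t ->
       inL F' t /\ (forall o, outs F' t o -> outs F s o)).
End Dev.

Section Ops.
Variable (Y : eqType).

Definition shrink (N : seq Y) (s : seq Y) : seq Y :=
  [seq y <- s | y \notin N].

Inductive pump (L : seq Y -> Prop) (N : seq Y) : seq Y -> seq Y -> Prop :=
| pump_eps : pump L N [::] [::]
| pump_refl s : L s -> pump L N s s
| pump_ins s t b k : pump L N s t -> b \in N -> 0 < k <= size t ->
    pump L N s (take k t ++ b :: drop k t).
End Ops.

From mathcomp Require Import all_boot.

(* The transition matrices of the words over N form a finite monoid, so a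
   terminal strongly connected component of its Cayley graph with respect to
   the generators N yields an N-word z that can always be recovered: for every
   b in N some N-word y makes z b y act on the states of F' exactly as z does.
   Let F'' run F' on the letters outside N, each letter a acting as the word
   a z.  For s in L(F), insert z after the first letter (which is not in N)
   and, after every later letter c, insert z if c is not in N and the word y
   of c if it is.  The result W is an N-pump of s acting in F' exactly as the
   run of F'' on the N-shrink of s, so F'' inherits at s what F' guarantees
   at W. *)

Set Implicit Arguments.
Unset Strict Implicit.
Unset Printing Implicit Defensive.

Section TerminalComponent.
Variables (T : finType) (e : rel T).

Lemma connect_terminal x :
  exists2 g, connect e x g & forall h, connect e g h -> connect e h g.
Proof.
(* Minimising the number of successors forces every successor to reach back. *)
pose out g := [set h | connect e g h].
have [g xg gmin] := arg_minnP (fun g => #|out g|) (connect0 e x).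
exists g => // h gh.
have out_sub : out h \subset out g.
  by apply/subsetP => k; rewrite !inE; apply: connect_trans.
have /eqP out_eq : out h == out g.
  by rewrite eqEcard out_sub gmin //; apply: connect_trans gh.
have : g \in out h by rewrite out_eq inE connect0.
by rewrite inE.
Qed.

End TerminalComponent.

Section Transitions.
Variables (Y : eqType) (C : Type) (G : device Y C).

Lemma reaches_cat (v w : dst G) x y :
  reaches v (x ++ y) w = [exists u, reaches v x u && reaches u y w].
Proof.
elim: x v => [|a x IHx] v /=.
  apply/idP/existsP => [vyw | [u /andP[/eqP-> //]]].
  by exists v; rewrite eqxx.
apply/existsP/existsP => [[u /andP[vau]] | [u /andP[/existsP[u' /andP[vau' u'xu]] uyw]]].
  rewrite IHx => /existsP[u' /andP[uxu' u'yw]].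
  by exists u'; rewrite u'yw andbT; apply/existsP; exists u; rewrite vau.
by exists u'; rewrite vau' IHx; apply/existsP; exists u; rewrite u'xu.
Qed.

Lemma reaches_obs (v w : dst G) s : reaches v s w -> all (mem (dobs G)) s.
Proof.
elim: s v => [|a s IHs] v //= /existsP[u /andP[vau usw]].
by rewrite (dtau_obs vau) (IHs u).
Qed.

Lemma inL_obs s : inL G s -> all (mem (dobs G)) s.
Proof. by case/set0Pn=> w; rewrite inE => /existsP[v /andP[_ /reaches_obs]]. Qed.

Definition transition (x : seq Y) : {ffun dst G * dst G -> bool} :=
  [ffun vw => reaches vw.1 x vw.2].

Lemma transitionE x v w : transition x (v, w) = reaches v x w.
Proof. by rewrite ffunE. Qed.

Lemma transition_cat x x' y y' : transition x = transition x' ->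
  transition y = transition y' -> transition (x ++ y) = transition (x' ++ y').
Proof.
move=> xx' yy'; apply/ffunP => -[v w]; rewrite !transitionE !reaches_cat.
by apply: eq_existsb => u; rewrite -!transitionE xx' yy'.
Qed.

Lemma reached_transition x x' :
  transition x = transition x' -> reached G x = reached G x'.
Proof.
move=> xx'; apply/setP => w; rewrite !inE.
by apply: eq_existsb => v; rewrite -!transitionE xx'.
Qed.

Definition transition_rcons (f : {ffun dst G * dst G -> bool}) (b : Y) :
    {ffun dst G * dst G -> bool} :=
  [ffun vw => [exists u, f (vw.1, u) && dtau u vw.2 b]].

Lemma transition_rconsE x b :
  transition (rcons x b) = transition_rcons (transition x) b.
Proof.
apply/ffunP => -[v w]; rewrite !ffunE -cats1 reaches_cat.
apply: eq_existsb => u; rewrite ffunE /=; congr (_ && _).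
by apply/existsP/idP => [[w' /andP[ubw' /eqP->]] | ubw] //; exists w; rewrite ubw eqxx.
Qed.

End Transitions.

Section AbsorbingWord.
Variables (Y : eqType) (C : Type) (G : device Y C) (N : seq Y).

Definition letter_step : rel {ffun dst G * dst G -> bool} :=
  fun f g => has (fun b => g == transition_rcons f b) N.

Lemma connect_letter_step x y :
  all (mem N) y -> connect letter_step (transition G x) (transition G (x ++ y)).
Proof.
elim: y x => [|b y IHy] x /=; first by rewrite cats0 connect0.
case/andP=> bN yN; rewrite -cat_rcons; apply: connect_trans (IHy _ yN).
by apply: connect1; apply/hasP; exists b; rewrite // transition_rconsE.
Qed.

Lemma connect_letter_stepP x g : connect letter_step (transition G x) g ->
  exists2 y, all (mem N) y & g = transition G (x ++ y).
Proof.
case/connectP=> p; elim: p x => [|f p IHp] x /= => [_ -> | /andP[/hasP[b bN /eqP->]]].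
  by exists [::]; rewrite ?cats0.
rewrite -transition_rconsE => /IHp IHx /IHx[y yN ->].
by exists (b :: y); rewrite /= ?bN ?cat_rcons.
Qed.

Lemma absorbing_word : exists2 z, all (mem N) z &
  forall b, b \in N -> exists2 y, all (mem N) y &
    transition G (z ++ b :: y) = transition G z.
Proof.
have [g /connect_letter_stepP[z zN ->] terminal] :=
  connect_terminal letter_step (transition G [::]).
exists z => // b bN.
have /terminal : connect letter_step (transition G z) (transition G (z ++ [:: b])).
  by apply: connect_letter_step; rewrite /= bN.
by case/connect_letter_stepP=> y yN zby; exists y; rewrite // zby -catA.
Qed.

End AbsorbingWord.

Section Pads.
Variables (Y : eqType) (N : seq Y).

Inductive pads : seq Y -> seq Y -> Prop :=
| pads_nil : pads [::] [::]
| pads_cons c r u w : all (mem N) u -> pads r w -> pads (c :: r) (c :: u ++ w).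

Lemma pads_all (P : pred Y) r w : all P N -> pads r w -> all P r -> all P w.
Proof.
move=> PN; elim=> {r w} // c r u w uN _ IHw /= /andP[-> /IHw Pw].
by rewrite all_cat Pw andbT; apply/allP=> b /(allP uN); apply: (allP PN).
Qed.

Variable L : seq Y -> Prop.

Lemma pump_insert s p q u : p != [::] -> all (mem N) u ->
  pump L N s (p ++ q) -> pump L N s (p ++ u ++ q).
Proof.
move=> p0; elim: u => [|b u IHu] //= /andP[bN /IHu spuq] /spuq spuq'.
have := pump_ins (k := size p) spuq' bN.
rewrite take_size_cat // drop_size_cat //; apply.
by rewrite size_cat leq_addr andbT lt0n size_eq0.
Qed.

Lemma pump_pads_cat s p r w :
  pads r w -> pump L N s (p ++ r) -> pump L N s (p ++ w).
Proof.
move=> rw; elim: rw p => {r w} // c r u w uN _ IHw p.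
have pc0 : rcons p c != [::] by case: p.
rewrite -cat_rcons => /(pump_insert pc0 uN); rewrite catA => /IHw.
by rewrite -catA cat_rcons.
Qed.

Lemma pads_pump s w : L s -> pads s w -> pump L N s w.
Proof. by move=> Ls sw; apply: (pump_pads_cat (p := [::]) sw); apply: pump_refl. Qed.

End Pads.

Definition expand (Y : Type) (z t : seq Y) := flatten [seq a :: z | a <- t].

Lemma expand_cons (Y : Type) (z : seq Y) a t :
  expand z (a :: t) = (a :: z) ++ expand z t.
Proof. by []. Qed.

Section ShrinkDevice.
Variables (Y : eqType) (C : Type) (G : device Y C) (N z : seq Y).

Definition shrink_tau (v w : dst G) (a : Y) := (a \notin N) && reaches v (a :: z) w.

Lemma shrink_tau_obs v w a : shrink_tau v w a -> a \in dobs G.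
Proof. by case/andP=> _ /reaches_obs /andP[]. Qed.

Definition shrink_device : device Y C :=
  Device (dinit_nonempty G) shrink_tau_obs (@dout_nonempty _ _ G).

Lemma reaches_shrink_device (v w : dst G) t : all (fun a => a \notin N) t ->
  reaches (F := shrink_device) v t w = reaches v (expand z t) w.
Proof.
elim: t v => [|a t IHt] v // /andP[aN tN].
rewrite expand_cons reaches_cat; apply: eq_existsb => u.
by congr (_ && _); [rewrite /= /shrink_tau aN | exact: IHt].
Qed.

Lemma reached_shrink_device t : all (fun a => a \notin N) t ->
  reached shrink_device t = reached G (expand z t).
Proof.
move=> tN; apply/setP => w; rewrite !inE.
by apply: eq_existsb => v; rewrite reaches_shrink_device.
Qed.

End ShrinkDevice.

Section Padding.
Variables (Y : eqType) (C : Type) (G : device Y C) (N z : seq Y).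
Hypothesis zN : all (mem N) z.
Hypothesis z_absorbing : forall b, b \in N ->
  exists2 y, all (mem N) y & transition G (z ++ b :: y) = transition G z.

Lemma exists_pads_expand r : exists2 w, pads N r w &
  transition G (z ++ w) = transition G (z ++ expand z (shrink N r)).
Proof.
elim: r => [|c r [w rw zw]]; first by exists [::]; first exact: pads_nil.
rewrite /shrink /= in zw *; case: (boolP (c \in N)) => [cN | cN] /=.
  have [y yN zcy] := z_absorbing cN.
  exists (c :: y ++ w); first exact: pads_cons.
  have -> : z ++ c :: y ++ w = (z ++ c :: y) ++ w by rewrite -catA.
  by rewrite -zw; apply: transition_cat.
exists (c :: z ++ w); first exact: pads_cons.
by rewrite expand_cons -!cat_rcons; apply: transition_cat.
Qed.

End Padding.

Theorem lemma5 (Y : eqType) (C : Type) (F : device Y C) (N : seq Y) :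
  {subset N <= dobs F} ->
  (forall (y : Y) (s : seq Y), inL F (y :: s) ->
     y \in dobs F /\ y \notin N) ->
  (exists F' : device Y C,
     output_simulates F F'
       (fun t => all (mem (dobs F)) t)
       (pump (inL F) N)) ->
  exists F' : device Y C,
    output_simulates F F'
      (fun t => all (fun y => (y \in dobs F) && (y \notin N)) t)
      (fun s t => inL F s /\ t = shrink N s).
Proof.
move=> NF head_notin_N [F' simF'].
have [z zN z_absorbing] := absorbing_word F' N.
exists (shrink_device F' N z) => s Fs.
have [W sW sW_trans] : exists2 W, pads N s W &
    transition F' W = transition F' (expand z (shrink N s)).
  case: s Fs => [|a r] Fs; first by exists [::]; first exact: pads_nil.
  have [_ aN] := head_notin_N a r Fs.
  have [w rw zw] := exists_pads_expand zN z_absorbing r.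
  exists (a :: z ++ w); first exact: pads_cons.
  rewrite /shrink /= aN expand_cons in zw *.
  exact: (transition_cat (x := [:: a]) erefl zw).
have reached_W : reached (shrink_device F' N z) (shrink N s) = reached F' W.
  by rewrite reached_shrink_device ?filter_all // (reached_transition sW_trans).
have W_obs : all (mem (dobs F)) W.
  by apply: (pads_all _ sW (inL_obs Fs)); apply/allP.
have [F'W outW] := (simF' s Fs).2 W W_obs (pads_pump Fs sW).
have F''s : inL (shrink_device F' N z) (shrink N s) by rewrite /inL reached_W.
split; first by exists (shrink N s).
move=> _ _ [_ ->]; split=> //.
by move=> o [v]; rewrite reached_W => W_v v_o; apply: outW; exists v.
Qed.
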